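(* Let $d=d'+d''$ and, for $\tau=(\tau',\tau'')\in(0,1]^2$, let $g_\tau$ be the metric on $\mathbb{R}^{2d}=\mathbb{R}^{2(d'+d'')}$, with coordinates $X=(q',q'',p)$, $q'\in\mathbb{R}^{d'}$, $q''\in\mathbb{R}^{d''}$, $p\in\mathbb{R}^d$, given by $$g_\tau=\frac{\tau'dq'^2}{\langle\sqrt{\tau'}q'\rangle^2}+\tau''dq''^2+\frac{\tau'\tau''dp^2}{\langle\sqrt{\tau'\tau''}p\rangle^2}.$$ Then the family $(g_\tau)_{\tau\in(0,1]^2}$ is admissible.
   Context: $\langle t\rangle=(1+|t|^2)^{1/2}$. The symplectic form on $\mathbb{R}^{2d}_{q,p}$ is $\sigma(X,X_1)=\sum_j(p^jq_{1,j}-q_jp_1^j)$ for $X=(q,p)$, $X_1=(q_1,p_1)$. For a metric $g$ (a family of positive definite quadratic forms $g_X$, $X\in\mathbb{R}^{2d}$), the dual metric is $g^\sigma_X(T)=\sup_{T_1\neq0}\frac{|\sigma(T,T_1)|^2}{g_X(T_1)}$ and the gain is $\lambda(X)=\inf_{T\ne0}(g^\sigma_X(T)/g_X(T))^{1/2}$. A family $(g_\tau)_{\tau\in\mathcal{T}}$ of metrics is admissible if: (uncertainty) $\lambda_\tau(X)\ge1$ for all $\tau,X$; (slowness) there is $C_1>0$ independent of $\tau$ such that $g_{\tau,X}(X-Y)\le1/C_1$ implies $(g_{\tau,X}/g_{\tau,Y})^{\pm1}\le C_1$ (i.e. $C_1^{-1}g_{\tau,Y}\le g_{\tau,X}\le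 C_1g_{\tau,Y}$ as quadratic forms); (temperance) there are $C_2,N_2>0$ independent of $\tau$ such that for all $X,Y$, $(g_{\tau,X}/g_{\tau,Y})^{\pm1}\le C_2(1+g^\sigma_{\tau,X}(X-Y))^{N_2}$. *)

From HB Require Import structures.
From mathcomp Require Import all_boot all_order all_algebra.
From mathcomp Require Import all_classical all_reals all_analysis.
Set Implicit Arguments. Unset Strict Implicit. Unset Printing Implicit Defensive.
Import Order.TTheory GRing.Theory Num.Theory.
Local Open Scope ring_scope.
Local Open Scope classical_set_scope.

(* Points / tangent vectors of R^{2n} : pairs X = (q, p) with q, p in R^n. *)
Definition phase (R : realType) (n : nat) := ('rV[R]_n * 'rV[R]_n)%type.

Definition sqn (R : realType) (n : nat) (v : 'rV[R]_n) : R :=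
  \sum_(i < n) (v ord0 i) ^+ 2.

Definition sigma (R : realType) (n : nat) (X X1 : phase R n) : R :=
  \sum_(j < n) (X.2 ord0 j * X1.1 ord0 j - X.1 ord0 j * X1.2 ord0 j).

(* A metric: g X T is the quadratic form g_X evaluated at T. *)
Definition metric (R : realType) (n : nat) := phase R n -> phase R n -> R.

Definition dual_metric (R : realType) (n : nat) (g : metric R n)
  (X T : phase R n) : R :=
  sup [set r : R | exists T1 : phase R n, T1 != 0 /\
                   r = `|sigma T T1| ^+ 2 / g X T1].

Definition gain (R : realType) (n : nat) (g : metric R n) (X : phase R n) : R :=
  inf [set r : R | exists T : phase R n, T != 0 /\
                   r = Num.sqrt (dual_metric g X T / g X T)].

(* (g_X / g_Y)^{+-1} <= C, i.e. C^-1 g_Y <= g_X <= C g_Y as quadratic forms. *)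
Definition ratio_le (R : realType) (n : nat) (g : metric R n)
  (X Y : phase R n) (C : R) : Prop :=
  forall T : phase R n, g X T <= C * g Y T /\ g Y T <= C * g X T.

Definition admissible (R : realType) (n : nat) (I : Type) (P : I -> Prop)
  (g : I -> metric R n) : Prop :=
  (forall tau, P tau -> forall X, 1 <= gain (g tau) X) /\
  (exists C1 : R, 0 < C1 /\ forall tau, P tau -> forall X Y : phase R n,
       g tau X (X - Y) <= C1^-1 -> ratio_le (g tau) X Y C1) /\
  (exists C2 N2 : R, 0 < C2 /\ 0 < N2 /\ forall tau, P tau ->
     forall X Y : phase R n,
       ratio_le (g tau) X Y (C2 * (1 + dual_metric (g tau) X (X - Y)) `^ N2)).

Definition gA9 (R : realType) (d1 d2 : nat) (tau : R * R) :
  metric R (d1 + d2) :=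
  fun X T =>
    let q1 := lsubmx X.1 in
    let Tq1 := lsubmx T.1 in
    let Tq2 := rsubmx T.1 in
    tau.1 * sqn Tq1 / (1 + sqn (Num.sqrt tau.1 *: q1)) +
    tau.2 * sqn Tq2 +
    tau.1 * tau.2 * sqn T.2 / (1 + sqn (Num.sqrt (tau.1 * tau.2) *: X.2)).

Definition unit_square (R : realType) (tau : R * R) : Prop :=
  0 < tau.1 <= 1 /\ 0 < tau.2 <= 1.

(** [g_tau] is diagonal in the coordinates (q, p) with weights in (0, 1]:
    [g_X = sum_i a_i(X) dq_i^2 + b_i(X) dp_i^2].  For such a metric the dual
    metric dominates [sum_i dp_i^2 / a_i + dq_i^2 / b_i], which dominates both
    [g_X] and the Euclidean norm because all weights are at most 1; the first
    gives the uncertainty principle.  The weights of [g_tau] are [tau''] and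
    [c / <sqrt c x>^2] with [(c, x) = (tau', q')] or [(tau' tau'', p)].
    Between [X] and [Y] such a weight changes at most by the factor 4 when
    [g_X(X - Y) <= 1/4] (slowness), and in general at most by Peetre's factor
    [2 (1 + |x - y|^2) <= 2 (1 + g^sigma_X(X - Y))] (temperance). *)
From mathcomp Require Import all_boot all_order all_algebra.
From mathcomp Require Import all_classical all_reals all_analysis.
From mathcomp Require Import ring lra.
Import Order.TTheory GRing.Theory Num.Theory.
Set Implicit Arguments. Unset Strict Implicit. Unset Printing Implicit Defensive.
Local Open Scope ring_scope.
Local Open Scope classical_set_scope.

Section Preliminaries.
Variable R : realType.

Definition within_factor (K x y : R) : Prop := x <= K * y /\ y <= K * x.

Lemma within_factor_refl (K x : R) : 1 <= K -> 0 <= x -> within_factor K x x.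
Proof. by move=> K1 x0; split; rewrite ler_peMl. Qed.

Lemma am_gm_weighted (w t x y : R) : 0 < w ->
  2 * t * x * y <= t ^+ 2 * (x ^+ 2 / w) + w * y ^+ 2.
Proof.
move=> w0.
have -> : t ^+ 2 * (x ^+ 2 / w) + w * y ^+ 2 = 2 * t * x * y + (t * x - w * y) ^+ 2 / w.
  by field; rewrite gt_eqF.
by rewrite lerDl divr_ge0 // ?sqr_ge0 ?ltW.
Qed.

Lemma sqr_le_sqr_div (w x : R) : 0 < w -> w <= 1 -> x ^+ 2 <= x ^+ 2 / w.
Proof. by move=> w0 w1; rewrite ler_pdivlMr // ler_piMr ?sqr_ge0. Qed.

Lemma sqn_ge0 m (v : 'rV[R]_m) : 0 <= sqn v.
Proof. by apply: sumr_ge0 => i _; rewrite sqr_ge0. Qed.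

Lemma sqnZ m c (v : 'rV[R]_m) : sqn (c *: v) = c ^+ 2 * sqn v.
Proof. by rewrite /sqn mulr_sumr; apply: eq_bigr => i _; rewrite mxE exprMn. Qed.

Lemma sqn_subC m (u v : 'rV[R]_m) : sqn (u - v) = sqn (v - u).
Proof. by rewrite -opprB -scaleN1r sqnZ sqrrN expr1n mul1r. Qed.

Lemma sqn_split m1 m2 (v : 'rV[R]_(m1 + m2)) :
  sqn v = sqn (lsubmx v) + sqn (rsubmx v).
Proof.
by rewrite /sqn big_split_ord; congr (_ + _); apply: eq_bigr => i _; rewrite mxE.
Qed.

Lemma sqn_le_sub m (u v : 'rV[R]_m) : sqn v <= 2 * sqn u + 2 * sqn (u - v).
Proof.
rewrite /sqn !mulr_sumr -big_split /=; apply: ler_sum => i _; rewrite !mxE.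
by have := sqr_ge0 (2 * u ord0 i - v ord0 i); nra.
Qed.

Lemma phase_eq0 n (T : phase R n) :
  (forall i, T.1 ord0 i = 0 /\ T.2 ord0 i = 0) -> T = 0.
Proof.
case: T => q p T0; congr pair; apply/rowP => i; rewrite mxE; by case: (T0 i).
Qed.

End Preliminaries.

Section JapaneseBracketWeight.
Variable R : realType.

(* [jweight c |x|^2 = c / <sqrt c x>^2]. *)
Definition jweight (c s : R) : R := c / (1 + c * s).

Lemma jweight_gt0 (c s : R) : 0 < c -> 0 <= s -> 0 < jweight c s.
Proof. by move=> c0 s0; rewrite divr_gt0 // ltr_pwDl // mulr_ge0 // ltW. Qed.

Lemma jweight_le1 (c s : R) : 0 < c -> c <= 1 -> 0 <= s -> jweight c s <= 1.
Proof.
move=> c0 c1 s0; have cs0 : 0 <= c * s by rewrite mulr_ge0 // ltW.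
by rewrite ler_pdivrMr ?mul1r; lra.
Qed.

Lemma jweight_le_factor (K c s r : R) : 0 < c -> 0 <= s -> 0 <= r ->
  1 + c * r <= K * (1 + c * s) -> jweight c s <= K * jweight c r.
Proof.
move=> c0 s0 r0 H; have cs0 : 0 < 1 + c * s by rewrite ltr_pwDl // mulr_ge0 // ltW.
have cr0 : 0 < 1 + c * r by rewrite ltr_pwDl // mulr_ge0 // ltW.
rewrite /jweight mulrA ler_pdivrMr // mulrAC ler_pdivlMr //.
by rewrite [K * c]mulrC -mulrA ler_wpM2l // ltW.
Qed.

Lemma jweight_slow m (c : R) (x y : 'rV[R]_m) : 0 < c ->
  jweight c (sqn x) * sqn (x - y) <= 4^-1 ->
  within_factor 4 (jweight c (sqn x)) (jweight c (sqn y)).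
Proof.
move=> c0 small.
have sx := sqn_ge0 x; have sy := sqn_ge0 y; have se := sqn_ge0 (x - y).
have ce : c * sqn (x - y) <= (1 + c * sqn x) / 4.
  have cx0 : 0 < 1 + c * sqn x by rewrite ltr_pwDl // mulr_ge0 // ltW.
  by move: small; rewrite /jweight mulrAC ler_pdivrMr // [4^-1 * _]mulrC.
have cy : c * sqn y <= 2 * (c * sqn x) + 2 * (c * sqn (x - y)).
  by have := ler_wpM2l (ltW c0) (sqn_le_sub x y); lra.
have cx : c * sqn x <= 2 * (c * sqn y) + 2 * (c * sqn (x - y)).
  by have := ler_wpM2l (ltW c0) (sqn_le_sub y x); rewrite [sqn (y - x)]sqn_subC; lra.
have cx0 : 0 <= c * sqn x by rewrite mulr_ge0 // ltW.
have cy0 : 0 <= c * sqn y by rewrite mulr_ge0 // ltW.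
by split; apply: jweight_le_factor => //; lra.
Qed.

Lemma jweight_temperate m (c Q : R) (x y : 'rV[R]_m) : 0 < c -> c <= 1 ->
  1 + sqn (x - y) <= Q ->
  within_factor (2 * Q) (jweight c (sqn x)) (jweight c (sqn y)).
Proof.
move=> c0 c1 HQ.
have sx := sqn_ge0 x; have sy := sqn_ge0 y; have se := sqn_ge0 (x - y).
have ce : c * sqn (x - y) <= sqn (x - y) by rewrite ler_piMl.
(* Peetre's inequality [<x> <= sqrt 2 <x - y> <y>], squared and scaled by [c]. *)
have peetre u v : sqn v <= 2 * sqn u + 2 * sqn (x - y) ->
    1 + c * sqn v <= 2 * Q * (1 + c * sqn u).
  move=> uv; have su := sqn_ge0 u; have sv := sqn_ge0 v.
  have cu0 : 0 <= c * sqn u by rewrite mulr_ge0 // ltW.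
  have cv : c * sqn v <= 2 * (c * sqn u) + 2 * (c * sqn (x - y)).
    by have := ler_wpM2l (ltW c0) uv; lra.
  have ceu : 0 <= c * sqn (x - y) * (c * sqn u) by rewrite !mulr_ge0 // ltW.
  have : (1 + c * sqn (x - y)) * (1 + c * sqn u) <= Q * (1 + c * sqn u).
    by rewrite ler_wpM2r //; lra.
  nra.
split; apply: jweight_le_factor => //; apply: peetre; first exact: sqn_le_sub.
by rewrite sqn_subC sqn_le_sub.
Qed.

End JapaneseBracketWeight.

Section DiagonalMetric.
Variables (R : realType) (n : nat) (a b : phase R n -> 'I_n -> R).
Hypotheses (a_gt0 : forall X i, 0 < a X i) (b_gt0 : forall X i, 0 < b X i).
Hypotheses (a_le1 : forall X i, a X i <= 1) (b_le1 : forall X i, b X i <= 1).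
Implicit Types X T : phase R n.

Definition diag_metric : metric R n := fun X T =>
  \sum_(i < n) (a X i * T.1 ord0 i ^+ 2 + b X i * T.2 ord0 i ^+ 2).

Definition diag_dual X T : R :=
  \sum_(i < n) (T.2 ord0 i ^+ 2 / a X i + T.1 ord0 i ^+ 2 / b X i).

Lemma diag_term_ge0 X T i :
  0 <= a X i * T.1 ord0 i ^+ 2 /\ 0 <= b X i * T.2 ord0 i ^+ 2.
Proof. by split; rewrite mulr_ge0 ?sqr_ge0 // ltW. Qed.

Lemma diag_metric_ge0 X T : 0 <= diag_metric X T.
Proof. by apply: sumr_ge0 => i _; have [] := diag_term_ge0 X T i; apply: addr_ge0. Qed.

Lemma diag_metric_gt0 X T : T != 0 -> 0 < diag_metric X T.
Proof.
move=> T0; rewrite lt_def diag_metric_ge0 andbT; apply: contra T0 => /eqP g0.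
apply/eqP/phase_eq0 => i; have [aT0 bT0] := diag_term_ge0 X T i.
have term_ge0 j : 0 <= a X j * T.1 ord0 j ^+ 2 + b X j * T.2 ord0 j ^+ 2.
  by have [] := diag_term_ge0 X T j; apply: addr_ge0.
have := psumr_eq0P (fun j _ => term_ge0 j) g0; move/(_ i isT)/eqP.
rewrite paddr_eq0 // !mulf_eq0 (gt_eqF (a_gt0 X i)) (gt_eqF (b_gt0 X i)) /= !orbb.
by case/andP => /eqP -> /eqP ->.
Qed.

Lemma diag_dual_ge0 X T : 0 <= diag_dual X T.
Proof.
by apply: sumr_ge0 => i _; rewrite addr_ge0 // divr_ge0 ?sqr_ge0 // ltW.
Qed.

Lemma sigma_le_diag X T T1 t :
  2 * t * sigma T T1 <= t ^+ 2 * diag_dual X T + diag_metric X T1.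
Proof.
rewrite /sigma /diag_dual /diag_metric !mulr_sumr -big_split /=.
apply: ler_sum => i _.
have := am_gm_weighted t (T.2 ord0 i) (T1.1 ord0 i) (a_gt0 X i).
have := am_gm_weighted t (- T.1 ord0 i) (T1.2 ord0 i) (b_gt0 X i).
rewrite sqrrN; nra.
Qed.

(* Not the sharp Cauchy-Schwarz bound: this only has to make the supremum
   defining the dual metric finite. *)
Lemma sigma_sqr_div_le X T T1 : T1 != 0 ->
  `|sigma T T1| ^+ 2 / diag_metric X T1 <= diag_dual X T + 1.
Proof.
move=> T10; rewrite real_normK ?num_real // ler_pdivrMr ?diag_metric_gt0 //.
set s := sigma T T1; set D := diag_dual X T; set g := diag_metric X T1.
have E0 : 0 < D + 1 by have := diag_dual_ge0 X T; rewrite -/D; lra.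
have := sigma_le_diag X T T1 (s / (D + 1)); rewrite -/s -/D -/g.
set k := s / (D + 1); have -> : s = k * (D + 1) by rewrite /k divfK // gt_eqF.
move=> sigma_le; have k2 := sqr_ge0 k.
have kg : k ^+ 2 * (D + 1) <= g by nra.
by have := ler_wpM2l (ltW E0) kg; rewrite exprMn; nra.
Qed.

Lemma diag_metric_ratio_le X Y K : 0 <= K ->
  (forall i, within_factor K (a X i) (a Y i)) ->
  (forall i, within_factor K (b X i) (b Y i)) ->
  ratio_le diag_metric X Y K.
Proof.
move=> K0 aXY bXY T; rewrite /diag_metric !mulr_sumr.
split; apply: ler_sum => i _; have [aXY1 aXY2] := aXY i; have [bXY1 bXY2] := bXY i;
  have q2 := sqr_ge0 (T.1 ord0 i); have p2 := sqr_ge0 (T.2 ord0 i); nra.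
Qed.

Lemma diag_metric_le_diag_dual X T : diag_metric X T <= diag_dual X T.
Proof.
apply: ler_sum => i _.
have := sqr_le_sqr_div (T.1 ord0 i) (b_gt0 X i) (b_le1 X i).
have := sqr_le_sqr_div (T.2 ord0 i) (a_gt0 X i) (a_le1 X i).
have : a X i * T.1 ord0 i ^+ 2 <= T.1 ord0 i ^+ 2 by rewrite ler_piMl ?sqr_ge0.
have : b X i * T.2 ord0 i ^+ 2 <= T.2 ord0 i ^+ 2 by rewrite ler_piMl ?sqr_ge0.
lra.
Qed.

Lemma sqn_le_diag_dual X T : sqn T.1 + sqn T.2 <= diag_dual X T.
Proof.
rewrite /sqn -big_split /=; apply: ler_sum => i _.
have := sqr_le_sqr_div (T.1 ord0 i) (b_gt0 X i) (b_le1 X i).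
have := sqr_le_sqr_div (T.2 ord0 i) (a_gt0 X i) (a_le1 X i).
lra.
Qed.

Hypothesis n_gt0 : (0 < n)%N.

Definition unit_q : phase R n := (const_mx 1, 0).

Lemma unit_q_neq0 : unit_q != 0.
Proof.
apply/eqP => /(congr1 (fun Z : phase R n => Z.1 ord0 (Ordinal n_gt0))).
by rewrite !mxE => /eqP; rewrite oner_eq0.
Qed.

Lemma has_sup_sigma X T : has_sup
  [set r : R | exists T1, T1 != 0 /\ r = `|sigma T T1| ^+ 2 / diag_metric X T1].
Proof.
split; first by eexists; exists unit_q; split; [exact: unit_q_neq0 | reflexivity].
by exists (diag_dual X T + 1) => _ [T1 [T10 ->]]; apply: sigma_sqr_div_le.
Qed.

(* The supremum is attained at [T1 = (dp / a, - dq / b)], where both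
   [sigma T T1] and [g_X(T1)] equal [diag_dual X T]. *)
Lemma diag_dual_le_dual_metric X T : diag_dual X T <= dual_metric diag_metric X T.
Proof.
have [->|T0] := eqVneq T 0.
  have -> : diag_dual X 0 = 0.
    by rewrite /diag_dual big1 // => i _; rewrite !mxE expr0n /= !mul0r addr0.
  apply: le_trans (sup_upper_bound (has_sup_sigma X 0) _); last first.
    by exists unit_q; split; first exact: unit_q_neq0.
  by rewrite divr_ge0 ?sqr_ge0 ?diag_metric_ge0.
pose T1 : phase R n := (\row_i (T.2 ord0 i / a X i), \row_i (- (T.1 ord0 i / b X i))).
have sigma_T1 : sigma T T1 = diag_dual X T.
  by apply: eq_bigr => i _; rewrite !mxE; ring.
have g_T1 : diag_metric X T1 = diag_dual X T.
  apply: eq_bigr => i _; rewrite !mxE.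
  by field; rewrite (gt_eqF (a_gt0 X i)) (gt_eqF (b_gt0 X i)).
have T10 : T1 != 0.
  apply: contra T0 => /eqP T10; apply/eqP/phase_eq0 => i.
  have := congr1 (fun Z : phase R n => (Z.1 ord0 i, Z.2 ord0 i)) T10.
  case; rewrite !mxE => /eqP + /eqP.
  rewrite oppr_eq0 !mulf_eq0 !invr_eq0 (gt_eqF (a_gt0 X i)) (gt_eqF (b_gt0 X i)) !orbF.
  by move=> /eqP -> /eqP ->.
apply: sup_upper_bound (has_sup_sigma X T) _ _; exists T1; split => //.
rewrite sigma_T1 g_T1 real_normK ?num_real //.
have [->|D0] := eqVneq (diag_dual X T) 0; first by rewrite invr0 mulr0.
by rewrite expr2 mulfK.
Qed.

Lemma dual_diag_metric_ge0 X T : 0 <= dual_metric diag_metric X T.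
Proof. exact: le_trans (diag_dual_ge0 X T) (diag_dual_le_dual_metric X T). Qed.

Lemma sqn_le_dual_metric X T : sqn T.1 + sqn T.2 <= dual_metric diag_metric X T.
Proof. exact: le_trans (sqn_le_diag_dual X T) (diag_dual_le_dual_metric X T). Qed.

Lemma gain_diag_metric_ge1 X : 1 <= gain diag_metric X.
Proof.
apply: lb_le_inf.
  by eexists; exists unit_q; split; [exact: unit_q_neq0 | reflexivity].
move=> _ [T [T0 ->]]; have g0 := diag_metric_gt0 X T0.
have g_le_dual : diag_metric X T <= dual_metric diag_metric X T.
  exact: le_trans (diag_metric_le_diag_dual X T) (diag_dual_le_dual_metric X T).
rewrite -sqrtr1 ler_sqrt; last by rewrite divr_ge0 // (le_trans (ltW g0)).
by rewrite ler_pdivlMr // mul1r.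
Qed.

End DiagonalMetric.

Section PropositionA9.
Variables (R : realType) (d1 d2 : nat) (t1 t2 : R).
Hypotheses (t1_gt0 : 0 < t1) (t1_le1 : t1 <= 1) (t2_gt0 : 0 < t2) (t2_le1 : t2 <= 1).
Local Notation n := (d1 + d2)%N.
Hypothesis n_gt0 : (0 < d1 + d2)%N.
Local Notation g := (gA9 (t1, t2)).
Implicit Types X Y T : phase R n.

Definition weight_q' X := jweight t1 (sqn (lsubmx X.1)).
Definition weight_p X := jweight (t1 * t2) (sqn X.2).
Definition weight_q X (i : 'I_n) := if (i < d1)%N then weight_q' X else t2.

Let t12_gt0 : 0 < t1 * t2. Proof. exact: mulr_gt0. Qed.
Let t12_le1 : t1 * t2 <= 1. Proof. by rewrite mulr_ile1 // ltW. Qed.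

Lemma weight_q'_gt0 X : 0 < weight_q' X. Proof. exact/jweight_gt0/sqn_ge0. Qed.
Lemma weight_p_gt0 X : 0 < weight_p X. Proof. exact/jweight_gt0/sqn_ge0. Qed.
Lemma weight_p_le1 X : weight_p X <= 1. Proof. exact/jweight_le1/sqn_ge0. Qed.

Lemma weight_q_gt0 X i : 0 < weight_q X i.
Proof. by rewrite /weight_q; case: ifP => _ //; apply: weight_q'_gt0. Qed.

Lemma weight_q_le1 X i : weight_q X i <= 1.
Proof. by rewrite /weight_q; case: ifP => _ //; apply/jweight_le1/sqn_ge0. Qed.

Lemma gA9E X T : g X T =
  weight_q' X * sqn (lsubmx T.1) + t2 * sqn (rsubmx T.1) + weight_p X * sqn T.2.
Proof.
rewrite /gA9 /= !sqnZ !sqr_sqrtr ?(ltW t1_gt0) ?(ltW t12_gt0) //.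
by rewrite /weight_q' /weight_p /jweight; congr (_ + _ + _); rewrite mulrAC.
Qed.

Lemma gA9_diag : g = diag_metric weight_q (fun X _ => weight_p X).
Proof.
apply/funext => X; apply/funext => T.
rewrite gA9E /diag_metric big_split /= -mulr_sumr big_split_ord /= /sqn !mulr_sumr.
congr (_ + _ + _); apply: eq_bigr => i _; rewrite mxE /weight_q /=.
  by rewrite ltn_ord.
by rewrite ltnNge leq_addr.
Qed.

Lemma weight_q_within K X Y : 1 <= K ->
  within_factor K (weight_q' X) (weight_q' Y) ->
  forall i, within_factor K (weight_q X i) (weight_q Y i).
Proof.
by move=> K1 w i; rewrite /weight_q; case: ifP => // _; apply/within_factor_refl/ltW.
Qed.

Let weight_p_gt0_at X (i : 'I_n) : 0 < weight_p X. Proof. exact: weight_p_gt0. Qed.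
Let weight_p_le1_at X (i : 'I_n) : weight_p X <= 1. Proof. exact: weight_p_le1. Qed.

Lemma gain_gA9_ge1 X : 1 <= gain g X.
Proof.
rewrite gA9_diag.
exact: gain_diag_metric_ge1 weight_q_gt0 weight_p_gt0_at weight_q_le1 weight_p_le1_at n_gt0 X.
Qed.

Lemma dual_gA9_ge0 X T : 0 <= dual_metric g X T.
Proof. by rewrite gA9_diag; apply: dual_diag_metric_ge0 weight_q_gt0 weight_p_gt0_at n_gt0 X T. Qed.

Lemma gA9_slow X Y : g X (X - Y) <= 4^-1 -> ratio_le g X Y 4.
Proof.
rewrite gA9E linearB /= => small.
have q'0 := mulr_ge0 (ltW (weight_q'_gt0 X)) (sqn_ge0 (lsubmx X.1 - lsubmx Y.1)).
have q''0 := mulr_ge0 (ltW t2_gt0) (sqn_ge0 (rsubmx (X.1 - Y.1))).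
have p0 := mulr_ge0 (ltW (weight_p_gt0 X)) (sqn_ge0 (X.2 - Y.2)).
have /(jweight_slow t1_gt0) slow_q' : weight_q' X * sqn (lsubmx X.1 - lsubmx Y.1) <= 4^-1.
  by lra.
have /(jweight_slow t12_gt0) slow_p : weight_p X * sqn (X.2 - Y.2) <= 4^-1 by lra.
rewrite gA9_diag; apply: diag_metric_ratio_le => [|i|_]; first by rewrite ler0n.
- by apply: (weight_q_within _ slow_q'); rewrite ler1n.
- exact: slow_p.
Qed.

Lemma gA9_temperate X Y :
  ratio_le g X Y (2 * (1 + dual_metric g X (X - Y))).
Proof.
have := sqn_le_dual_metric weight_q_gt0 weight_p_gt0_at weight_q_le1 weight_p_le1_at
  n_gt0 X (X - Y).
rewrite -gA9_diag sqn_split linearB /=.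
set Q := 1 + dual_metric g X (X - Y) => sqn_le_dual.
have sq' := sqn_ge0 (lsubmx X.1 - lsubmx Y.1).
have sq'' := sqn_ge0 (rsubmx (X.1 - Y.1)).
have sp := sqn_ge0 (X.2 - Y.2).
have /(jweight_temperate t1_gt0 t1_le1) temp_q' : 1 + sqn (lsubmx X.1 - lsubmx Y.1) <= Q.
  by rewrite /Q; lra.
have /(jweight_temperate t12_gt0 t12_le1) temp_p : 1 + sqn (X.2 - Y.2) <= Q.
  by rewrite /Q; lra.
rewrite gA9_diag; apply: diag_metric_ratio_le => [|i|_].
- by rewrite /Q; lra.
- by apply: (weight_q_within _ temp_q'); rewrite /Q; lra.
- exact: temp_p.
Qed.

End PropositionA9.

Theorem propositionA9 (R : realType) (d1 d2 : nat) (hd : (0 < d1 + d2)%N) :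
  admissible (@unit_square R) (@gA9 R d1 d2).
Proof.
split; [|split].
- by move=> [t1 t2] [/andP[t1_gt0 t1_le1] /andP[t2_gt0 t2_le1]] X; apply: gain_gA9_ge1.
- exists 4; split=> // [[t1 t2]] [/andP[t1_gt0 t1_le1] /andP[t2_gt0 t2_le1]] X Y.
  exact: gA9_slow.
- exists 2, 1; do 2!split=> //.
  move=> [t1 t2] [/andP[t1_gt0 t1_le1] /andP[t2_gt0 t2_le1]] X Y.
  by rewrite powRr1 ?addr_ge0 ?dual_gA9_ge0 //; apply: gA9_temperate.
Qed.
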